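(* Let $\Gamma$ be a finitely generated group and $H\le\Gamma$ an amenable subgroup. If for some finite symmetric generating set $S$ of $\Gamma$ the Schreier graph $\mathrm{Sch}(\Gamma,H,S)$ is extraterrestrial, then $\Gamma$ is extraterrestrial.
   Context: The (right) Schreier graph $\mathrm{Sch}(\Gamma,H,S)$ has vertex set the right cosets $\{Hg:g\in\Gamma\}$, with an edge between $Hg$ and $Hg'$ whenever $Hg'=Hgs$ for some $s\in S$. A graph $G=(V,E)$ (with shortest-path metric $d_G$) is extraterrestrial if for every $m\in\mathbb N$ there exists $k\in\mathbb N$ such that for every $r\in\mathbb N$ there exists an $(m,k,r)$-UFO: a triple $(U,F,O)$ of pairwise disjoint finite subsets of $V$ with $U\ne\emptyset$, $|U|\ge m|F|$, a bijection $\mu:U\to O$ with $d_G(u,\mu(u))\le k$ for all $u\in U$, and such that every path (sequence of distinct vertices, consecutive ones adjacent) from a vertex of $U$ to a vertex of $O$ either contains a vertex of $F$ or has length at least $r$. A finitely generated group is extraterrestrial if its Cayley graph $\mathrm{Cay}(\Gamma,S)$ (edges $\{g,gs\}$) is extraterrestrial for some (equivalently any) finite symmetric generating set $S$. *)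

From Stdlib Require Import Reals List Permutation.
Import ListNotations.
Set Implicit Arguments.

Record Group := {
  carrier :> Type;
  gmul : carrier -> carrier -> carrier;
  ginv : carrier -> carrier;
  gone : carrier;
  gmulA : forall x y z, gmul x (gmul y z) = gmul (gmul x y) z;
  gmul1l : forall x, gmul gone x = x;
  gmulVl : forall x, gmul (ginv x) x = gone
}.

Arguments gmul {g}.
Arguments ginv {g}.
Arguments gone {g}.

Definition gprod {G : Group} (l : list G) : G := fold_right (@gmul G) (@gone G) l.

Definition fin_sym_gen {G : Group} (S : list G) : Prop :=
  (forall s, In s S -> In (ginv s) S) /\
  (forall g : G, exists w : list G, Forall (fun s => In s S) w /\ g = gprod (G:=G) w).

Definition subgroup {G : Group} (H : G -> Prop) : Prop :=
  H (@gone G) /\ (forall x y, H x -> H y -> H (gmul x y)) /\ (forall x, H x -> H (ginv x)).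

(* Subsets of H are represented as predicates A on G with A included in H. *)
Definition amenable_subgroup {G : Group} (H : G -> Prop) : Prop :=
  exists mu : (G -> Prop) -> R,
    mu H = 1%R /\
    (forall A, (forall x, A x -> H x) -> (0 <= mu A)%R) /\
    (forall A B, (forall x, A x -> H x) -> (forall x, B x -> H x) ->
        (forall x, A x -> B x -> False) ->
        mu (fun x => A x \/ B x) = (mu A + mu B)%R) /\
    (forall h A, H h -> (forall x, A x -> H x) ->
        mu (fun x => exists a, A a /\ x = gmul h a) = mu A).

(* walk adj u v p : u, p_1, ..., p_n is a walk from u to v with n = length p edges *)
Fixpoint walk (V : Type) (adj : V -> V -> Prop) (u v : V) (p : list V) : Prop :=
  match p with
  | [] => u = v
  | x :: p' => adj u x /\ walk adj x v p'
  end.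

Definition gpath (V : Type) (adj : V -> V -> Prop) (u v : V) (p : list V) : Prop :=
  walk adj u v p /\ NoDup (u :: p).

Definition dist_le (V : Type) (adj : V -> V -> Prop) (k : nat) (u v : V) : Prop :=
  exists p, walk adj u v p /\ length p <= k.

Definition disjoint_l (V : Type) (A B : list V) : Prop :=
  forall x, In x A -> In x B -> False.

(* (m,k,r)-UFO; finite sets are duplicate-free lists *)
Definition UFO (V : Type) (adj : V -> V -> Prop) (m k r : nat) : Prop :=
  exists (U F O : list V) (mu : V -> V),
    NoDup U /\ NoDup F /\ NoDup O /\
    disjoint_l U F /\ disjoint_l U O /\ disjoint_l F O /\
    U <> [] /\
    m * length F <= length U /\
    (* mu restricted to U is a bijection U -> O *)
    Permutation (map mu U) O /\
    (forall u, In u U -> dist_le adj k u (mu u)) /\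
    (forall u o p, In u U -> In o O -> gpath adj u o p ->
        (exists x, In x (u :: p) /\ In x F) \/ r <= length p).

Definition extraterrestrial (V : Type) (adj : V -> V -> Prop) : Prop :=
  forall m, exists k, forall r, UFO adj m k r.

Definition cay_adj {G : Group} (S : list G) (g g' : G) : Prop :=
  exists s, In s S /\ g' = gmul g s.

Definition rcoset {G : Group} (H : G -> Prop) (g : G) : G -> Prop :=
  fun x => exists h, H h /\ x = gmul h g.

Definition Coset {G : Group} (H : G -> Prop) : Type :=
  { C : G -> Prop | exists g, C = rcoset H g }.

Definition sch_adj {G : Group} (H : G -> Prop) (S : list G) (C D : Coset H) : Prop :=
  exists s, In s S /\ proj1_sig D = (fun x => exists y, proj1_sig C y /\ x = gmul y s).

Definition group_extraterrestrial (G : Group) : Prop :=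
  exists S : list G, fin_sym_gen S /\ extraterrestrial (cay_adj S).

Arguments sch_adj {G} H S C D.
Arguments cay_adj {G} S g g'.

(** Let (U, F, O) be a UFO in the Schreier graph, for the constant 2m.  Since H is
    amenable, for every finite E ⊆ H there is a finite nonempty K ⊆ H with |K E| <= 2 |K|: otherwise
    every finite P ⊆ H satisfies |E⁻¹ P| >= 2 |P|, Hall's marriage theorem gives on each finite part of
    H two jointly injective maps x ↦ e⁻¹ x with e ∈ E, a compactness argument (H is countable, being a
    subgroup of a finitely generated group) glues them into a paradoxical decomposition of H, and an
    invariant mean would then give 2 <= 1.  Choose E to consist of the elements of H of the form
    g_u w g_C⁻¹, with g_u, g_C fixed representatives of the cosets u ∈ U, C ∈ F and w a word of length
    < r.  Then U' = K g_U, F' = K E g_F and O' = K y_U (with y_u ∈ μ(u) close to g_u) is an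
    (m, k, r)-UFO in the Cayley graph: |U'| = |K| |U| >= 2m |K| |F| >= m |F'|, and a short path from U'
    to O' projects to a short Schreier path from U to O, which meets a coset C ∈ F at a vertex
    z = κ g_u w = (κ e) g_C with e ∈ E, so z ∈ F'. *)

From Stdlib Require Import Reals List Permutation.
From Stdlib Require Import ClassicalEpsilon ProofIrrelevance FunctionalExtensionality
  PropExtensionality Lia Lra Classical Arith.
Import ListNotations.

Definition cdec {T : Type} (x y : T) : {x = y} + {x <> y} := excluded_middle_informative (x = y).

Definition card {T : Type} (l : list T) : nat := length (nodup cdec l).

Definition asbool (P : Prop) : bool := if excluded_middle_informative P then true else false.

Lemma asboolE (P : Prop) : asbool P = true <-> P.
Proof. unfold asbool. destruct (excluded_middle_informative P); intuition congruence. Qed.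

Lemma card_nil {T} : card (@nil T) = 0.
Proof. reflexivity. Qed.

Lemma card_cons {T} (a : T) l : card (a :: l) = if in_dec cdec a l then card l else S (card l).
Proof. unfold card; simpl. destruct (in_dec cdec a l); reflexivity. Qed.

Lemma card_cons_in {T} (a : T) l : In a l -> card (a :: l) = card l.
Proof. intro H; rewrite card_cons; destruct (in_dec cdec a l); tauto. Qed.

Lemma card_cons_notin {T} (a : T) l : ~ In a l -> card (a :: l) = S (card l).
Proof. intro H; rewrite card_cons; destruct (in_dec cdec a l); tauto. Qed.

Lemma card_cons_le {T} (a : T) l : card (a :: l) <= S (card l).
Proof. rewrite card_cons; destruct (in_dec cdec a l); lia. Qed.

Lemma card_incl {T} (l1 l2 : list T) : incl l1 l2 -> card l1 <= card l2.
Proof.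
  intro H. apply NoDup_incl_length; [apply NoDup_nodup|].
  intros x Hx. apply nodup_In, H, (nodup_In cdec), Hx.
Qed.

Lemma card_ext {T} (l1 l2 : list T) : (forall x, In x l1 <-> In x l2) -> card l1 = card l2.
Proof. intro H. apply Nat.le_antisymm; apply card_incl; intros x Hx; apply H; auto. Qed.

Lemma card_le_length {T} (l : list T) : card l <= length l.
Proof.
  induction l as [|a l IH]; cbn [length]; [rewrite card_nil; lia|].
  pose proof (card_cons_le a l). lia.
Qed.

Lemma card_single {T} (l : list T) a : (forall x, In x l -> x = a) -> card l <= 1.
Proof.
  intro H. change 1 with (card [a]).
  apply card_incl. intros y Hy. rewrite (H y Hy). now left.
Qed.

Lemma card_pair {T} (x y : T) : x <> y -> card [x; y] = 2.
Proof.
  intro hxy. rewrite card_cons_notin by (intros [h|[]]; auto).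
  rewrite card_cons_notin by (intros []). reflexivity.
Qed.

Definition inter {T} (l1 l2 : list T) := filter (fun x => asbool (In x l2)) l1.

Lemma in_inter {T} (l1 l2 : list T) x : In x (inter l1 l2) <-> In x l1 /\ In x l2.
Proof. unfold inter. rewrite filter_In, asboolE. reflexivity. Qed.

Lemma card_app_inter {T} (l1 l2 : list T) :
  card (l1 ++ l2) + card (inter l1 l2) = card l1 + card l2.
Proof.
  induction l1 as [|a l1 IH]; cbn [app].
  - unfold inter; cbn [filter]. rewrite card_nil. lia.
  - assert (Hi : inter (a :: l1) l2 = if asbool (In a l2) then a :: inter l1 l2 else inter l1 l2)
      by reflexivity.
    rewrite Hi. destruct (asbool (In a l2)) eqn:E2; rewrite ?asboolE in E2.
    + rewrite card_cons_in by (apply in_or_app; auto).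
      destruct (in_dec cdec a l1) as [H1|H1].
      * rewrite (card_cons_in a l1 H1), card_cons_in; [lia|]. apply in_inter; auto.
      * rewrite (card_cons_notin a l1 H1), card_cons_notin; [lia|]. rewrite in_inter; tauto.
    + assert (n2 : ~ In a l2) by (intro h; apply asboolE in h; congruence).
      destruct (in_dec cdec a l1) as [H1|H1].
      * rewrite (card_cons_in a l1 H1), card_cons_in by (apply in_or_app; auto). lia.
      * rewrite (card_cons_notin a l1 H1), card_cons_notin; [lia|]. rewrite in_app_iff; tauto.
Qed.

Lemma card_app_le {T} (l1 l2 : list T) : card (l1 ++ l2) <= card l1 + card l2.
Proof. pose proof (card_app_inter l1 l2). lia. Qed.

Lemma card_map_le {T U} (f : T -> U) l : card (map f l) <= card l.
Proof.
  induction l as [|a l IH]; cbn [map]; [rewrite card_nil; lia|].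
  destruct (in_dec cdec a l) as [H|H].
  - rewrite card_cons_in by (apply in_map; auto). rewrite (card_cons_in a l H); auto.
  - rewrite (card_cons_notin a l H). pose proof (card_cons_le (f a) (map f l)). lia.
Qed.

Lemma card_map_inj {T U} (f : T -> U) l :
  (forall x y, f x = f y -> x = y) -> card (map f l) = card l.
Proof.
  intro Hf. induction l as [|a l IH]; cbn [map]; [reflexivity|].
  destruct (in_dec cdec a l) as [H|H].
  - rewrite card_cons_in by (apply in_map; auto). rewrite (card_cons_in a l H); auto.
  - rewrite (card_cons_notin a l H), card_cons_notin; [lia|].
    intros (y & Hy & Hy')%in_map_iff. apply Hf in Hy. subst; auto.
Qed.

Lemma card_prod_le {T U} (l : list T) (l' : list U) : card (list_prod l l') <= card l * length l'.
Proof.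
  induction l as [|a l IH]; cbn [list_prod]; [rewrite card_nil; lia|].
  destruct (in_dec cdec a l) as [H|H].
  - rewrite (card_cons_in a l H).
    enough (card (map (fun y => (a, y)) l' ++ list_prod l l') <= card (list_prod l l')) by lia.
    apply card_incl. intros [x y] [Hx|Hx]%in_app_iff; auto.
    apply in_map_iff in Hx as (z & [= <- <-] & Hz). apply in_prod; auto.
  - rewrite (card_cons_notin a l H).
    pose proof (card_app_le (map (fun y => (a, y)) l') (list_prod l l')).
    pose proof (card_le_length (map (fun y : U => (a, y)) l')). rewrite length_map in *. lia.
Qed.


Lemma card_flat_map_le {T U} (f : T -> list U) n l :
  (forall x, length (f x) <= n) -> card (flat_map f l) <= n * card l.
Proof.
  intro hf. induction l as [|a l IH]; cbn [flat_map]; [rewrite card_nil; lia|].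
  destruct (in_dec cdec a l) as [h|h].
  - rewrite (card_cons_in a l h).
    enough (card (f a ++ flat_map f l) <= card (flat_map f l)) by lia.
    apply card_incl. intros w [hw|hw]%in_app_iff; auto. apply in_flat_map; eauto.
  - rewrite (card_cons_notin a l h).
    pose proof (card_app_le (f a) (flat_map f l)). pose proof (card_le_length (f a)).
    pose proof (hf a). lia.
Qed.

(** * Hall's marriage theorem *)

Section Hall.
Variables (A B : Type) (b0 : B).

Definition neighbours (N : A -> list B) (Y : list A) : list B := flat_map N Y.

Definition hall_condition (N : A -> list B) (X : list A) : Prop :=
  forall Y, incl Y X -> card Y <= card (neighbours N Y).

Definition total_degree (N : A -> list B) (X : list A) : nat :=
  list_sum (map (fun x => length (N x)) X).

Definition drop_neighbour (N : A -> list B) (x : A) (y : B) : A -> list B :=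
  fun z => if cdec z x then remove cdec y (N x) else N z.

Lemma drop_neighbour_incl N x y z : incl (drop_neighbour N x y z) (N z).
Proof.
  unfold drop_neighbour. destruct (cdec z x) as [->|_]; [|apply incl_refl].
  intros w hw. apply in_remove in hw. tauto.
Qed.

Lemma list_sum_map_lt {T} (f g : T -> nat) l x :
  (forall z, f z <= g z) -> In x l -> f x < g x -> list_sum (map f l) < list_sum (map g l).
Proof.
  intros hle hx hlt.
  assert (hsum : forall l', list_sum (map f l') <= list_sum (map g l')).
  { induction l' as [|a l' IH]; simpl in *; [lia|]. specialize (hle a). lia. }
  induction l as [|a l IH]; [destruct hx|]. specialize (hsum l). simpl in *.
  destruct hx as [<-|hx]; [|specialize (IH hx)]; specialize (hle a); lia.
Qed.

Lemma total_degree_drop N X x y :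
  In x X -> In y (N x) -> total_degree (drop_neighbour N x y) X < total_degree N X.
Proof.
  intros hx hy. apply (list_sum_map_lt _ _ X x); auto.
  - intro z. unfold drop_neighbour. destruct (cdec z x) as [->|_]; [apply remove_length_le|lia].
  - unfold drop_neighbour. destruct (cdec x x); [apply remove_length_lt; auto|congruence].
Qed.

Lemma not_hall_condition N X : ~ hall_condition N X ->
  exists Y, incl Y X /\ card (neighbours N Y) < card Y.
Proof.
  intro H. apply NNPP. intro H'. apply H. intros Y HY.
  destruct (Nat.le_gt_cases (card Y) (card (neighbours N Y))); auto.
  exfalso; apply H'; eauto.
Qed.

Lemma deficient_after_drop N X x y Y :
  hall_condition N X -> incl Y X -> card (neighbours (drop_neighbour N x y) Y) < card Y ->
  In x Y /\ card Y = S (card (remove cdec x Y)) /\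
  card (neighbours N (remove cdec x Y) ++ remove cdec y (N x))
    = card (neighbours (drop_neighbour N x y) Y).
Proof.
  intros HH HY C.
  assert (HxY : In x Y).
  { apply NNPP; intro n.
    enough (E : neighbours (drop_neighbour N x y) Y = neighbours N Y)
      by (rewrite E in C; specialize (HH Y HY); lia).
    unfold neighbours. rewrite !flat_map_concat_map. f_equal. apply map_ext_in. intros z hz. unfold drop_neighbour.
    destruct (cdec z x); [subst; tauto|auto]. }
  split; [exact HxY|split].
  - rewrite <- (card_cons_notin x (remove cdec x Y)) by apply remove_In.
    apply card_ext. intro w. split.
    + intro hw. destruct (cdec w x); [subst; left; auto|right; apply in_in_remove; auto].
    + intros [<-|hw]; auto. apply in_remove in hw. tauto.
  - apply card_ext. intro w. unfold neighbours, drop_neighbour.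
    rewrite in_app_iff, !in_flat_map. split.
    + intros [(z & hz & hw)|hw].
      * apply in_remove in hz as [hz hzx]. exists z. destruct (cdec z x); tauto.
      * exists x. destruct (cdec x x); tauto.
    + intros (z & hz & hw). destruct (cdec z x); [tauto|].
      left. exists z. split; auto. apply in_in_remove; auto.
Qed.

(* Rado's lemma, the induction step of Hall's theorem. *)
Lemma hall_condition_drop N X x y1 y2 :
  hall_condition N X -> In x X -> y1 <> y2 ->
  hall_condition (drop_neighbour N x y1) X \/ hall_condition (drop_neighbour N x y2) X.
Proof.
  intros HH Hx Hne.
  destruct (classic (hall_condition (drop_neighbour N x y1) X)) as [h1|h1]; [now left|].
  right. apply NNPP. intro h2.
  apply not_hall_condition in h1 as (Y1 & HY1 & C1).
  apply not_hall_condition in h2 as (Y2 & HY2 & C2).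
  destruct (deficient_after_drop N X x y1 Y1 HH HY1 C1) as (Hx1 & E1 & F1).
  destruct (deficient_after_drop N X x y2 Y2 HH HY2 C2) as (Hx2 & E2 & F2).
  set (Z1 := remove cdec x Y1) in *. set (Z2 := remove cdec x Y2) in *.
  set (S1 := neighbours N Z1 ++ remove cdec y1 (N x)) in *.
  set (S2 := neighbours N Z2 ++ remove cdec y2 (N x)) in *.
  assert (iZ1 : incl Z1 X) by (intros w hw; apply in_remove in hw; apply HY1; tauto).
  assert (iZ2 : incl Z2 X) by (intros w hw; apply in_remove in hw; apply HY2; tauto).
  (* Hall's condition for x :: Z1 ∪ Z2 and Z1 ∩ Z2, plus submodularity of the neighbourhood size *)
  assert (hU := HH (x :: Z1 ++ Z2)).
  assert (hI := HH (inter Z1 Z2)).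
  rewrite card_cons_notin in hU by (rewrite in_app_iff; intros [h|h]; apply remove_In in h; auto).
  assert (a1 : card (neighbours N (x :: Z1 ++ Z2)) <= card (S1 ++ S2)).
  { apply card_incl. intros w (z & hz & hw)%in_flat_map.
    unfold S1, S2, neighbours. rewrite !in_app_iff, !in_flat_map. destruct hz as [<-|hz].
    - destruct (cdec w y1) as [->|].
      + right; right. apply in_in_remove; auto.
      + left; right. apply in_in_remove; auto.
    - apply in_app_iff in hz as [hz|hz]; [left; left|right; left]; eauto. }
  assert (a2 : card (neighbours N (inter Z1 Z2)) <= card (inter S1 S2)).
  { apply card_incl. intros w (z & hz & hw)%in_flat_map.
    apply in_inter in hz. apply in_inter. unfold S1, S2, neighbours.
    rewrite !in_app_iff, !in_flat_map. split; left; exists z; tauto. }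
  assert (b1 := card_app_inter S1 S2). assert (b2 := card_app_inter Z1 Z2).
  specialize (hU ltac:(intros w [<-|[hw|hw]%in_app_iff]; auto)).
  specialize (hI ltac:(intros w hw; apply in_inter in hw; apply iZ1; tauto)).
  lia.
Qed.

Lemma hall_marriage_base N X :
  hall_condition N X ->
  (forall x y1 y2, In x X -> In y1 (N x) -> In y2 (N x) -> y1 = y2) ->
  exists f, (forall x, In x X -> In (f x) (N x)) /\
            (forall x y, In x X -> In y X -> f x = f y -> x = y).
Proof.
  intros HH Hno. exists (fun x => hd b0 (N x)).
  assert (Hne : forall x, In x X -> N x <> []).
  { intros x Hx E. specialize (HH [x] ltac:(intros w [<-|[]]; auto)).
    unfold neighbours in HH. cbn in HH. rewrite E in HH. cbn in HH. lia. }
  assert (Hhd : forall x w, In x X -> In w (N x) -> w = hd b0 (N x)).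
  { intros x w Hx Hw. destruct (N x) as [|a l] eqn:E; [destruct Hw|].
    apply (Hno x); [auto|rewrite E; auto|rewrite E; now left]. }
  split.
  - intros x Hx. specialize (Hne x Hx). destruct (N x); [congruence|now left].
  - intros x y Hx Hy Hf. apply NNPP. intro nn.
    specialize (HH [x; y] ltac:(intros w [<-|[<-|[]]]; auto)).
    rewrite card_pair in HH by auto.
    enough (card (neighbours N [x; y]) <= 1) by lia.
    apply (card_single _ (hd b0 (N x))). intros w (z & [<-|[<-|[]]] & hz)%in_flat_map;
      [|rewrite Hf]; apply Hhd; auto.
Qed.

Theorem hall_marriage N X : hall_condition N X ->
  exists f, (forall x, In x X -> In (f x) (N x)) /\
            (forall x y, In x X -> In y X -> f x = f y -> x = y).
Proof.
  remember (total_degree N X) as n eqn:Hn. revert N Hn.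
  induction n as [n IH] using (well_founded_induction lt_wf). intros N Hn HH.
  destruct (classic (exists x y1 y2, In x X /\ In y1 (N x) /\ In y2 (N x) /\ y1 <> y2))
    as [(x & y1 & y2 & Hx & H1 & H2 & Hne)|Hno].
  - assert (Hdrop : forall y, In y (N x) -> hall_condition (drop_neighbour N x y) X ->
      exists f, (forall z, In z X -> In (f z) (N z)) /\
                (forall z w, In z X -> In w X -> f z = f w -> z = w)).
    { intros y Hy HHy. subst n.
      destruct (IH _ (total_degree_drop N X x y Hx Hy) _ eq_refl HHy) as (f & Hf1 & Hf2).
      exists f. split; auto. intros z hz. apply (drop_neighbour_incl N x y), Hf1, hz. }
    destruct (hall_condition_drop N X x y1 y2 HH Hx Hne); [apply (Hdrop y1)|apply (Hdrop y2)]; auto.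
  - apply hall_marriage_base; auto.
    intros x y1 y2 Hx H1 H2. apply NNPP. intro. apply Hno. eauto 7.
Qed.

End Hall.
Arguments neighbours {A B}.
Arguments hall_condition {A B}.
Arguments hall_marriage {A B}.

Lemma choice_on {X Y : Type} (y0 : Y) (D : list X) (P : X -> Y -> Prop) :
  (forall x, In x D -> exists y, P x y) -> exists f, forall x, In x D -> P x (f x).
Proof.
  intro h.
  exists (fun x => match excluded_middle_informative (exists y, P x y) with
           | left hx => proj1_sig (constructive_indefinite_description _ hx)
           | right _ => y0 end).
  intros x hx. destruct (excluded_middle_informative (exists y, P x y)) as [h'|h'].
  - exact (proj2_sig (constructive_indefinite_description _ h')).
  - exfalso; apply h'; auto.
Qed.

Lemma pred_ext {X : Type} (P Q : X -> Prop) : (forall x, P x <-> Q x) -> P = Q.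
Proof. intro h. apply functional_extensionality. intro x. apply propositional_extensionality. auto. Qed.

Section GroupTheory.
Variable G : Group.
Local Notation "x ** y" := (@gmul G x y) (at level 40, left associativity).
Local Notation "x ^-1" := (@ginv G x) (at level 2).
Local Notation e := (@gone G).

Lemma gmulVr (x : G) : x ** x^-1 = e.
Proof.
  rewrite <- (gmul1l G (x ** x^-1)), <- (gmulVl G (x^-1)) at 1.
  rewrite <- gmulA, (gmulA G x^-1 x x^-1), gmulVl, gmul1l. apply gmulVl.
Qed.

Lemma gmul1r (x : G) : x ** e = x.
Proof. rewrite <- (gmulVl G x), gmulA, gmulVr, gmul1l. reflexivity. Qed.

Lemma gmulK (x y : G) : x ** y ** y^-1 = x.
Proof. rewrite <- gmulA, gmulVr, gmul1r. reflexivity. Qed.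

Lemma gcancl (a x y : G) : a ** x = a ** y -> x = y.
Proof.
  intro h. rewrite <- (gmul1l G x), <- (gmul1l G y), <- (gmulVl G a), <- !gmulA, h. reflexivity.
Qed.

Lemma gcancr (a x y : G) : x ** a = y ** a -> x = y.
Proof. intro h. rewrite <- (gmulK x a), <- (gmulK y a), h. reflexivity. Qed.

Lemma ginvK (x : G) : (x^-1)^-1 = x.
Proof. apply (gcancl x^-1). rewrite gmulVr, gmulVl. reflexivity. Qed.

Lemma ginvM (x y : G) : (x ** y)^-1 = y^-1 ** x^-1.
Proof.
  apply (gcancl (x ** y)). rewrite gmulVr, <- gmulA, (gmulA G y), gmulVr, gmul1l, gmulVr.
  reflexivity.
Qed.

Lemma ginv_inj (x y : G) : x^-1 = y^-1 -> x = y.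
Proof. intro h. rewrite <- (ginvK x), <- (ginvK y), h. reflexivity. Qed.

End GroupTheory.

(** * From expansion to a paradoxical map *)

Section Paradoxical.
Variable G : Group.
Local Notation "x ** y" := (@gmul G x y) (at level 40, left associativity).
Local Notation "x ^-1" := (@ginv G x) (at level 2).
Variable H : G -> Prop.
Variable exhaust : nat -> list G.
Hypothesis exhaust_sub : forall m x, In x (exhaust m) -> H x.
Hypothesis exhaust_mono : forall m m', m <= m' -> incl (exhaust m) (exhaust m').
Hypothesis exhaust_cover : forall x, H x -> exists m, In x (exhaust m).
Variable E : list G.
Hypothesis expansion : forall P : list G, (forall x, In x P -> H x) ->
  2 * card P <= card (map (fun q => (snd q)^-1 ** fst q) (list_prod P E)).

Definition shift (c : G -> nat * nat) (b : bool) (x : G) : G :=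
  (nth (if b then fst (c x) else snd (c x)) E (@gone G))^-1 ** x.

(* c x = (i, j) selects e_i, e_j ∈ E; c is paradoxical on D when the points e_i⁻¹ x, e_j⁻¹ x
   (x ∈ D) are pairwise distinct, so that D contains two disjoint translated copies of itself. *)
Definition paradoxical_on (D : list G) (c : G -> nat * nat) : Prop :=
  (forall x, In x D -> fst (c x) < length E /\ snd (c x) < length E) /\
  (forall x y bx byy, In x D -> In y D -> shift c bx x = shift c byy y -> x = y /\ bx = byy).

Definition agree (D : list G) (c c' : G -> nat * nat) : Prop := forall x, In x D -> c x = c' x.

Lemma paradoxical_on_incl D D' c : incl D D' -> paradoxical_on D' c -> paradoxical_on D c.
Proof. intros hi [h1 h2]. split; intros; [apply h1|apply h2]; auto. Qed.

Lemma paradoxical_on_agree D c c' : agree D c c' -> paradoxical_on D c' -> paradoxical_on D c.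
Proof.
  intros ha [h1 h2]. split.
  - intros x hx. rewrite (ha x hx). auto.
  - intros x y bx byy hx hy. unfold shift. rewrite (ha x hx), (ha y hy). apply h2; auto.
Qed.

Definition translates (p : G * bool) : list G := map (fun e => e^-1 ** fst p) E.

(* Hall's condition for the bipartite graph joining (x, b) to the points e⁻¹ x, e ∈ E: a set Y of
   pairs has at most twice as many elements as its set P of first coordinates. *)
Lemma translates_hall_condition D : (forall x, In x D -> H x) ->
  hall_condition translates (list_prod D [true; false]).
Proof.
  intros hD Y hY. set (P := map fst Y).
  assert (hP : forall x, In x P -> H x).
  { intros x ([a b] & <- & ha)%in_map_iff. apply hY, in_prod_iff in ha. apply hD; tauto. }
  assert (c1 : card Y <= 2 * card P).
  { eapply Nat.le_trans; [|apply (card_flat_map_le (fun x => [(x, true); (x, false)])); auto].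
    apply card_incl. intros [a b] h. apply in_flat_map. exists a. split.
    - apply in_map_iff. exists (a, b); auto.
    - destruct b; simpl; auto. }
  enough (card (map (fun q => (snd q)^-1 ** fst q) (list_prod P E)) = card (neighbours translates Y))
    by (specialize (expansion P hP); lia).
  apply card_ext. intro w. rewrite in_map_iff. unfold neighbours, translates. rewrite in_flat_map.
  split.
  - intros ([a e] & <- & [ha he]%in_prod_iff).
    apply in_map_iff in ha as (p & hp1 & hp2). exists p. split; auto.
    apply in_map_iff. exists e. rewrite hp1. auto.
  - intros (p & hp & (e & <- & he)%in_map_iff).
    exists (fst p, e). split; auto. apply in_prod; auto. apply in_map; auto.
Qed.

Lemma paradoxical_on_finite D : (forall x, In x D -> H x) -> exists c, paradoxical_on D c.
Proof.
  intro hD. set (X := list_prod D [true; false]). set (N := translates).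
  destruct (hall_marriage (@gone G) N X (translates_hall_condition D hD)) as (f & hf1 & hf2).
  assert (hc : forall x, In x D -> exists jj : nat * nat,
     fst jj < length E /\ snd jj < length E /\
     f (x, true) = (nth (fst jj) E (@gone G))^-1 ** x /\
     f (x, false) = (nth (snd jj) E (@gone G))^-1 ** x).
  { intros x hx.
    assert (h1 : In (f (x, true)) (N (x, true))) by (apply hf1, in_prod; simpl; auto).
    assert (h2 : In (f (x, false)) (N (x, false))) by (apply hf1, in_prod; simpl; auto).
    apply in_map_iff in h1 as (e1 & he1 & (j1 & hj1 & ej1)%(In_nth E _ (@gone G))).
    apply in_map_iff in h2 as (e2 & he2 & (j2 & hj2 & ej2)%(In_nth E _ (@gone G))).
    exists (j1, j2). simpl. rewrite ej1, ej2. auto. }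
  destruct (choice_on (0, 0) D _ hc) as [c hcc].
  exists c. split.
  - intros x hx. specialize (hcc x hx). tauto.
  - intros x y bx byy hx hy hi.
    assert (ex : forall z b, In z D -> shift c b z = f (z, b)).
    { intros z b hz. destruct (hcc z hz) as (_ & _ & q1 & q2). unfold shift. destruct b; auto. }
    rewrite (ex x bx hx), (ex y byy hy) in hi.
    apply hf2 in hi; [injection hi; auto|apply in_prod; simpl; destruct bx, byy; auto..].
Qed.

Definition extendable (c : G -> nat * nat) (D : list G) : Prop :=
  forall m, exists c', paradoxical_on (D ++ exhaust m) c' /\ agree D c c'.

Lemma extendable_nil c : extendable c [].
Proof.
  intro m. destruct (paradoxical_on_finite (exhaust m)) as [c' hc']; [apply exhaust_sub|].
  exists c'. split; [exact hc'|intros x []].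
Qed.

Lemma extendable_incl c D D' : incl D D' -> extendable c D' -> extendable c D.
Proof.
  intros hi hext m. destruct (hext m) as (c' & hv & hag). exists c'. split.
  - apply (paradoxical_on_incl _ (D' ++ exhaust m)); auto. apply incl_app_app; auto using incl_refl.
  - intros x hx. auto.
Qed.

Lemma eventually_all {V : Type} (P : V -> nat -> Prop) (l : list V) :
  (forall v m m', m <= m' -> P v m -> P v m') ->
  (forall v, In v l -> exists m, P v m) -> exists M, forall v, In v l -> P v M.
Proof.
  intros hmono h. induction l as [|v l IH]; [exists 0; intros _ []|].
  destruct IH as [M hM]; [intros; apply h; simpl; auto|].
  destruct (h v (or_introl eq_refl)) as [m hm].
  exists (max M m). intros w [<-|hw]; [apply (hmono _ m)|apply (hmono _ M)]; auto; lia.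
Qed.

Definition set_value (c : G -> nat * nat) a v : G -> nat * nat :=
  fun z => if cdec z a then v else c z.

(* König's lemma: among the finitely many values for c a, one must survive at every stage. *)
Lemma extendable_cons c D a : extendable c D -> H a ->
  exists c', extendable c' (a :: D) /\ agree D c c'.
Proof.
  intros hg ha.
  destruct (in_dec cdec a D) as [hin|hnin].
  { exists c. split; [|intros x _; auto].
    intro m. destruct (hg m) as (c' & hv & hag). exists c'. split.
    - apply (paradoxical_on_incl _ (D ++ exhaust m)); auto.
      intros x [<-|hx]; [apply in_or_app; left|]; auto.
    - intros x [<-|hx]; auto. }
  assert (hv : exists v, extendable (set_value c a v) (a :: D)).
  { apply NNPP. intro hno.
    set (fails := fun v m => ~ exists c', paradoxical_on ((a :: D) ++ exhaust m) c' /\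
                                          agree (a :: D) (set_value c a v) c').
    assert (hmono : forall v m m', m <= m' -> fails v m -> fails v m').
    { intros v m m' hle hp (c' & hv' & hag). apply hp. exists c'. split; auto.
      apply (paradoxical_on_incl _ ((a :: D) ++ exhaust m')); auto.
      apply incl_app_app; auto using incl_refl. }
    set (range := list_prod (seq 0 (length E)) (seq 0 (length E))).
    destruct (eventually_all fails range hmono) as [M hM].
    { intros v _. apply NNPP. intro hn. apply hno. exists v. intro m. apply NNPP. intro hn2.
      apply hn. exists m. exact hn2. }
    destruct (exhaust_cover a ha) as [ma hma].
    destruct (hg (max M ma)) as (c' & hv' & hag).
    assert (haL : In a (exhaust (max M ma))) by (apply (exhaust_mono ma); auto; lia).
    assert (hrange : In (c' a) range).
    { destruct hv' as [hr _]. destruct (hr a) as [r1 r2]; [apply in_or_app; auto|].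
      destruct (c' a) as [p q]. apply in_prod; apply in_seq; simpl in *; lia. }
    apply (hmono (c' a) M (max M ma)) in hM; [|lia|auto].
    apply hM. exists c'. split.
    - apply (paradoxical_on_incl _ (D ++ exhaust (max M ma))); auto.
      intros x [<-|hx]; [apply in_or_app; auto|auto].
    - intros x hx. unfold set_value. destruct (cdec x a) as [->|hxa]; [reflexivity|].
      destruct hx as [->|hx]; [contradiction|auto]. }
  destruct hv as [v hv]. exists (set_value c a v). split; auto.
  intros x hx. unfold set_value. destruct (cdec x a); [subst; contradiction|auto].
Qed.

Lemma extendable_app c D L : extendable c D -> (forall x, In x L -> H x) ->
  exists c', extendable c' (L ++ D) /\ agree D c c'.
Proof.
  revert c D. induction L as [|a L IH]; intros c D hg hL.
  - exists c. split; auto. intros x _; auto.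
  - destruct (IH c D hg) as (c1 & hg1 & ha1); [intros; apply hL; simpl; auto|].
    destruct (extendable_cons c1 (L ++ D) a hg1) as (c2 & hg2 & ha2); [apply hL; simpl; auto|].
    exists c2. split; auto. intros x hx. rewrite ha1 by auto. apply ha2, in_or_app; auto.
Qed.

Lemma extendable_exhaust_step c k : extendable c (exhaust k) ->
  exists c', extendable c' (exhaust (S k)) /\ agree (exhaust k) c c'.
Proof.
  intro hc.
  destruct (extendable_app c (exhaust k) (exhaust (S k)) hc (exhaust_sub (S k))) as (c' & hc' & hag).
  exists c'. split; auto. apply (extendable_incl _ _ _ (incl_appl _ (incl_refl _)) hc').
Qed.

Let inhabited_map : inhabited (G -> nat * nat) := inhabits (fun _ => (0, 0)).

Fixpoint extension_chain (k : nat) : G -> nat * nat :=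
  match k with
  | 0 => epsilon inhabited_map (fun c => extendable c (exhaust 0))
  | S k => epsilon inhabited_map
      (fun c' => extendable c' (exhaust (S k)) /\ agree (exhaust k) (extension_chain k) c')
  end.

Lemma extension_chain_extendable k : extendable (extension_chain k) (exhaust k).
Proof.
  induction k as [|k IH]; simpl.
  - apply epsilon_spec.
    destruct (extendable_app (fun _ => (0, 0)) [] (exhaust 0) (extendable_nil _) (exhaust_sub 0))
      as (c & hc & _).
    rewrite app_nil_r in hc. eauto.
  - apply (epsilon_spec inhabited_map
      (fun c' => extendable c' (exhaust (S k)) /\ agree (exhaust k) (extension_chain k) c')),
      extendable_exhaust_step, IH.
Qed.

Lemma extension_chain_agree k :
  agree (exhaust k) (extension_chain k) (extension_chain (S k)).
Proof.
  apply (epsilon_spec inhabited_map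
    (fun c' => extendable c' (exhaust (S k)) /\ agree (exhaust k) (extension_chain k) c')),
    extendable_exhaust_step, extension_chain_extendable.
Qed.

Lemma extension_chain_stable k j : k <= j ->
  agree (exhaust k) (extension_chain k) (extension_chain j).
Proof.
  induction 1 as [|j hle IH]; [intros x _; auto|].
  intros x hx. rewrite IH by auto. apply extension_chain_agree, (exhaust_mono k j); auto.
Qed.

Lemma paradoxical_map_exists : exists c, forall x y, H x -> H y -> paradoxical_on [x; y] c.
Proof.
  set (level := fun x => epsilon (inhabits 0) (fun k => In x (exhaust k))).
  assert (hlevel : forall x, H x -> In x (exhaust (level x))).
  { intros x hx. apply (epsilon_spec (inhabits 0) (fun k => In x (exhaust k))), exhaust_cover, hx. }
  exists (fun x => extension_chain (level x) x).
  intros x y hx hy.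
  set (k := max (level x) (level y)).
  destruct (extension_chain_extendable k 0) as (c' & hv & hag).
  assert (hxk : In x (exhaust k)) by (apply (exhaust_mono (level x)); auto; lia).
  assert (hyk : In y (exhaust k)) by (apply (exhaust_mono (level y)); auto; lia).
  apply (paradoxical_on_agree _ _ c').
  - intros z [<-|[<-|[]]]; rewrite <- hag by auto; apply extension_chain_stable; auto; lia.
  - apply (paradoxical_on_incl _ (exhaust k ++ exhaust 0)); auto.
    intros z [<-|[<-|[]]]; apply in_or_app; auto.
Qed.

End Paradoxical.

(** * An invariant mean forbids a paradoxical map *)

Section Mean.
Variable G : Group.
Local Notation "x ^-1" := (@ginv G x) (at level 2).
Variable H : G -> Prop.
Hypothesis H_subgroup : subgroup H.
Variable mu : (G -> Prop) -> R.
Hypothesis mu_H : mu H = 1%R.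
Hypothesis mu_ge0 : forall A, (forall x, A x -> H x) -> (0 <= mu A)%R.
Hypothesis mu_add : forall A B, (forall x, A x -> H x) -> (forall x, B x -> H x) ->
  (forall x, A x -> B x -> False) -> mu (fun x => A x \/ B x) = (mu A + mu B)%R.
Hypothesis mu_translate : forall h A, H h -> (forall x, A x -> H x) ->
  mu (fun x => exists a, A a /\ x = gmul h a) = mu A.

Lemma mu_ext A B : (forall x, A x <-> B x) -> mu A = mu B.
Proof. intro h. rewrite (pred_ext A B h). reflexivity. Qed.

Lemma mu_empty : mu (fun _ => False) = 0%R.
Proof.
  assert (h := mu_add (fun _ => False) (fun _ => False) (fun _ f => match f with end)
                 (fun _ f => match f with end) (fun _ f _ => f)).
  rewrite (mu_ext _ (fun _ => False)) in h by tauto. lra.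
Qed.

Lemma mu_le A B : (forall x, A x -> B x) -> (forall x, B x -> H x) -> (mu A <= mu B)%R.
Proof.
  intros hab hb.
  assert (h := mu_add A (fun x => B x /\ ~ A x) (fun x hx => hb x (hab x hx))
                 (fun x hx => hb x (proj1 hx)) (fun x h1 h2 => proj2 h2 h1)).
  rewrite (mu_ext _ B) in h.
  - assert (0 <= mu (fun x => B x /\ ~ A x))%R by (apply mu_ge0; intros x [hx _]; auto). lra.
  - intro x. split; [intros [h1|[h1 _]]; auto|]. intro h1. destruct (classic (A x)); auto.
Qed.

Fixpoint sumR (f : nat -> R) (n : nat) : R :=
  match n with 0 => 0%R | S n => (sumR f n + f n)%R end.

Lemma mu_bigcup (P : nat -> G -> Prop) n :
  (forall j x, P j x -> H x) -> (forall j j' x, P j x -> P j' x -> j = j') ->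
  mu (fun x => exists j, j < n /\ P j x) = sumR (fun j => mu (P j)) n.
Proof.
  intros hP hdis. induction n as [|n IH]; simpl.
  - rewrite <- mu_empty. apply mu_ext. intro x. split; [intros (j & hj & _); lia|tauto].
  - rewrite <- IH, <- mu_add.
    + apply mu_ext. intro x. split.
      * intros (j & hj & hx). destruct (Nat.eq_dec j n) as [->|hne]; [right; auto|].
        left. exists j. split; auto; lia.
      * intros [(j & hj & hx)|hx]; [exists j; split; auto; lia|exists n; split; auto].
    + intros x (j & _ & hx); eauto.
    + intros x hx; eauto.
    + intros x (j & hj & hx) hx'. specialize (hdis _ _ _ hx hx'). lia.
Qed.

Variable E : list G.
Hypothesis E_sub : forall e, In e E -> H e.
Variable c : G -> nat * nat.
Hypothesis c_paradoxical : forall x y, H x -> H y -> paradoxical_on G E [x; y] c.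

Let sel (b : bool) (p : nat * nat) := if b then fst p else snd p.
Let ej j := nth j E (@gone G).
Let piece b j := fun x => H x /\ sel b (c x) = j.
Let moved_piece b j := fun x => exists a, piece b j a /\ x = gmul (ej j)^-1 a.
Let moved_cover b := fun x => exists j, j < length E /\ moved_piece b j x.

Lemma ej_H j : H (ej j).
Proof.
  unfold ej. destruct (Nat.lt_ge_cases j (length E)); [apply E_sub, nth_In; auto|].
  rewrite nth_overflow by auto. apply H_subgroup.
Qed.

Lemma moved_piece_shift b j x : moved_piece b j x ->
  exists a, H a /\ x = shift G E c b a /\ sel b (c a) = j.
Proof.
  intros (a & [ha hs] & ->). exists a. repeat split; auto.
  unfold shift. destruct b; simpl in hs |- *; subst; reflexivity.
Qed.

Lemma moved_piece_H b j x : moved_piece b j x -> H x.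
Proof.
  intros (a & [ha _] & ->). destruct H_subgroup as (_ & hm & hi). apply hm; auto. apply hi, ej_H.
Qed.

(* Each family of moved pieces is a disjoint cover of H, so the two together have mean 2. *)
Lemma moved_cover_mean b : mu (moved_cover b) = 1%R.
Proof.
  unfold moved_cover. rewrite mu_bigcup.
  - assert (eqs : forall n, sumR (fun j => mu (moved_piece b j)) n = sumR (fun j => mu (piece b j)) n).
    { induction n as [|n IH]; simpl; auto. rewrite IH. f_equal. apply mu_translate.
      - apply H_subgroup, ej_H.
      - intros x [hx _]; auto. }
    rewrite eqs, <- mu_bigcup, <- mu_H.
    + apply mu_ext. intro x. split; [intros (j & _ & hx & _); auto|].
      intro hx. exists (sel b (c x)). split; [|split; auto].
      destruct (c_paradoxical x x hx hx) as [hr _]. destruct (hr x (or_introl eq_refl)).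
      destruct b; simpl; auto.
    + intros j x [hx _]; auto.
    + intros j j' x [_ h1] [_ h2]; congruence.
  - intros j x hx; eapply moved_piece_H; eauto.
  - intros j j' x (a & ha & -> & hs)%moved_piece_shift (a' & ha' & hx & hs')%moved_piece_shift.
    destruct (c_paradoxical a a' ha ha') as [_ hv]. destruct (hv a a' b b) as [-> _]; simpl; auto.
    congruence.
Qed.

Lemma paradoxical_map_contradicts_mean : False.
Proof.
  assert (hdisj : forall x, moved_cover true x -> moved_cover false x -> False).
  { intros x (j & _ & h1) (j' & _ & h2).
    apply moved_piece_shift in h1 as (a & ha & -> & _).
    apply moved_piece_shift in h2 as (a' & ha' & hx & _).
    destruct (c_paradoxical a a' ha ha') as [_ hv].
    destruct (hv a a' true false) as [_ hb]; simpl; auto. discriminate. }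
  assert (hsub : forall b x, moved_cover b x -> H x)
    by (intros b x (j & _ & h); eapply moved_piece_H; eauto).
  assert (hle : (mu (fun x => moved_cover true x \/ moved_cover false x) <= mu H)%R)
    by (apply mu_le; [intros x [h|h]; eapply hsub; eauto|auto]).
  rewrite mu_add, !moved_cover_mean in hle; [lra|apply hsub..|exact hdisj].
Qed.

End Mean.

(** * Sets of small doubling in an amenable subgroup *)

Fixpoint words {T : Type} (S : list T) (n : nat) : list (list T) :=
  match n with
  | 0 => [[]]
  | Datatypes.S n => flat_map (fun w => map (fun s => s :: w) S) (words S n)
  end.

Definition words_below {T : Type} (S : list T) (r : nat) : list (list T) :=
  flat_map (words S) (seq 0 r).

Lemma words_length {T} (S : list T) w : Forall (fun s => In s S) w -> In w (words S (length w)).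
Proof.
  induction w as [|a w IH]; intro h; simpl; [auto|].
  inversion h; subst. apply in_flat_map. exists w. split; auto. apply (in_map (fun s => s :: w)); auto.
Qed.

Lemma words_below_in {T} (S : list T) r w :
  Forall (fun s => In s S) w -> length w < r -> In w (words_below S r).
Proof. intros h hl. apply in_flat_map. exists (length w). split; [apply in_seq; lia|]. apply words_length, h. Qed.

Lemma words_below_mono {T} (S : list T) r r' : r <= r' -> incl (words_below S r) (words_below S r').
Proof.
  intros hle w (i & hi & hw)%in_flat_map. apply in_seq in hi.
  apply in_flat_map. exists i. split; auto. apply in_seq. lia.
Qed.

Section SmallDoubling.
Variable G : Group.
Local Notation "x ** y" := (@gmul G x y) (at level 40, left associativity).
Local Notation "x ^-1" := (@ginv G x) (at level 2).
Variable H : G -> Prop.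
Hypothesis H_subgroup : subgroup H.
Variable E : list G.

Definition product_set (K E : list G) : list G := map (fun p => fst p ** snd p) (list_prod K E).

(* Passing to inverses, K E becomes E⁻¹ K⁻¹. *)
Lemma expansion_of_large_doubling :
  (forall K, K <> [] -> NoDup K -> (forall k, In k K -> H k) ->
     2 * length K < card (product_set K E)) ->
  forall P, (forall x, In x P -> H x) ->
    2 * card P <= card (map (fun q => (snd q)^-1 ** fst q) (list_prod P E)).
Proof.
  intros hdoub P hP. destruct P as [|p0 P'] eqn:eP; [unfold card; simpl; lia|]. rewrite <- eP in *.
  set (K := nodup cdec (map (@ginv G) P)).
  assert (hK : K <> []).
  { intro e. assert (hin : In (p0^-1) K) by (apply nodup_In, in_map; subst P; now left).
    rewrite e in hin; destruct hin. }
  assert (hKH : forall k, In k K -> H k).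
  { intros k (x & <- & hx)%nodup_In%in_map_iff. apply H_subgroup; auto. }
  assert (e1 : length K = card P) by apply (card_map_inj (@ginv G)), ginv_inj.
  assert (e2 : card (product_set K E) = card (map (fun q => (snd q)^-1 ** fst q) (list_prod P E))).
  { rewrite <- (card_map_inj (@ginv G) (product_set K E)) by apply ginv_inj.
    apply card_ext. intro w. rewrite !in_map_iff. split.
    - intros (y & <- & ([k e] & <- & [hk he]%in_prod_iff)%in_map_iff).
      apply nodup_In, in_map_iff in hk as (x & <- & hx).
      exists (x, e). simpl. split; [rewrite ginvM, ginvK; reflexivity|apply in_prod; auto].
    - intros ([x e] & <- & [hx he]%in_prod_iff).
      exists (x^-1 ** e). simpl. split; [rewrite ginvM, ginvK; reflexivity|].
      apply in_map_iff. exists (x^-1, e). split; auto. apply in_prod; auto.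
      apply nodup_In, in_map; auto. }
  specialize (hdoub K hK (NoDup_nodup _ _) hKH). lia.
Qed.

Definition H_ball (S : list G) (m : nat) : list G :=
  filter (fun x => asbool (H x)) (map (@gprod G) (words_below S (Datatypes.S m))).

Theorem amenable_small_doubling (S : list G) :
  amenable_subgroup H ->
  (forall g : G, exists w : list G, Forall (fun s => In s S) w /\ g = gprod w) ->
  (forall e, In e E -> H e) ->
  exists K, K <> [] /\ NoDup K /\ (forall k, In k K -> H k) /\
    card (product_set K E) <= 2 * length K.
Proof.
  intros (mu & mu_H & mu_ge0 & mu_add & mu_translate) hgen hE.
  apply NNPP. intro hno.
  assert (hexp := expansion_of_large_doubling).
  destruct (paradoxical_map_exists G H (H_ball S)) with (E := E) as [c hc].
  - intros m x hx. apply filter_In in hx as [_ hx]. apply asboolE, hx.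
  - intros m m' hle x (hx & hH)%filter_In. apply filter_In. split; auto.
    apply in_map_iff in hx as (w & <- & hw). apply in_map.
    apply (words_below_mono S (Datatypes.S m)); auto; lia.
  - intros x hx. destruct (hgen x) as (w & hw & ->). exists (length w). apply filter_In.
    split; [apply in_map, words_below_in; auto|apply asboolE; auto].
  - apply hexp. intros K hK hnd hKH. apply Nat.nle_gt. intro hle. apply hno. exists K. auto.
  - exact (paradoxical_map_contradicts_mean G H H_subgroup mu mu_H mu_ge0 mu_add mu_translate
             E hE c hc).
Qed.

End SmallDoubling.

Lemma NoDup_map_inj_in {X Y} (f : X -> Y) l a b :
  NoDup (map f l) -> In a l -> In b l -> f a = f b -> a = b.
Proof.
  induction l as [|c l IH]; intros hn ha hb he; [destruct ha|]. simpl in hn. inversion hn; subst.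
  destruct ha as [<-|ha]; destruct hb as [<-|hb]; auto;
    exfalso; apply H1; [rewrite he|rewrite <- he]; apply in_map; auto.
Qed.

Lemma NoDup_list_prod {X Y} (l : list X) (l' : list Y) :
  NoDup l -> NoDup l' -> NoDup (list_prod l l').
Proof.
  intros h h'. induction h as [|a l ha hl IH]; simpl; [constructor|].
  apply NoDup_app; auto.
  - apply NoDup_map_NoDup_ForallPairs; auto. intros x y _ _ e; inversion e; auto.
  - intros [x y] (z & [= <- <-] & _)%in_map_iff hy. apply in_prod_iff in hy. tauto.
Qed.

Section Paths.
Variables (V : Type) (adj : V -> V -> Prop).

Lemma path_suffix x v q u : walk adj x v q -> NoDup (x :: q) -> In u (x :: q) ->
  exists q', gpath adj u v q' /\ length q' <= length q /\ incl (u :: q') (x :: q).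
Proof.
  revert x. induction q as [|y q IH]; intros x hw hn hu.
  - destruct hu as [<-|[]]. exists []. split; [split; assumption|split; auto using incl_refl].
  - destruct hu as [<-|hu].
    { exists (y :: q). split; [split; assumption|split; auto using incl_refl]. }
    destruct hw as [ha hw]. inversion hn; subst.
    destruct (IH y hw H2 hu) as (q' & h1 & h3 & h4). exists q'. split; [exact h1|split].
    + simpl; lia.
    + intros w hw'. right. apply h4, hw'.
Qed.

Lemma walk_to_path u v p : walk adj u v p ->
  exists q, gpath adj u v q /\ length q <= length p /\ incl (u :: q) (u :: p).
Proof.
  revert u. induction p as [|x p IH]; intros u hw.
  - exists []. split; [split; [exact hw|repeat constructor; auto]|split; auto using incl_refl].
  - destruct hw as [ha hw]. destruct (IH x hw) as (q & [hq hn] & hl & hi).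
    destruct (in_dec cdec u (x :: q)) as [hu|hu].
    + destruct (path_suffix x v q u hq hn hu) as (q' & h1 & h3 & h4).
      exists q'. split; [exact h1|split; [simpl; lia|]].
      intros w hw'. right. apply hi, h4, hw'.
    + exists (x :: q). split; [split; [split; auto|constructor; auto]|split; [simpl; lia|]].
      intros w [<-|hw']; [now left|right; apply hi, hw'].
Qed.

End Paths.

Section Cosets.
Variable G : Group.
Local Notation "x ** y" := (@gmul G x y) (at level 40, left associativity).
Local Notation "x ^-1" := (@ginv G x) (at level 2).
Variable H : G -> Prop.
Hypothesis H_subgroup : subgroup H.

Definition coset_of (g : G) : Coset H := exist _ (rcoset H g) (ex_intro _ g eq_refl).

Lemma coset_eq (C D : Coset H) : proj1_sig C = proj1_sig D -> C = D.
Proof. destruct C as [c pc], D as [d pd]; simpl; intro e; subst. f_equal. apply proof_irrelevance. Qed.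

Lemma rcoset_mem g x : rcoset H g x -> rcoset H x = rcoset H g.
Proof.
  intros (h & hh & ->). destruct H_subgroup as (h1 & hm & hi). apply pred_ext. intro y. split.
  - intros (h' & hh' & ->). exists (h' ** h). split; auto. rewrite gmulA; auto.
  - intros (h' & hh' & ->). exists (h' ** h^-1). split; auto.
    rewrite <- !gmulA, (gmulA G h^-1), gmulVl, gmul1l. auto.
Qed.

Lemma coset_of_mem (C : Coset H) x : proj1_sig C x -> coset_of x = C.
Proof.
  destruct C as [c [g ->]]. simpl. intro h. apply coset_eq. simpl. apply rcoset_mem, h.
Qed.

Lemma mem_coset_of (C : Coset H) x : coset_of x = C -> proj1_sig C x.
Proof. intros <-. simpl. exists (@gone G). split; [apply H_subgroup|]. rewrite gmul1l; auto. Qed.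

Lemma coset_of_mulH h x : H h -> coset_of (h ** x) = coset_of x.
Proof. intro hh. apply coset_of_mem. exists h; auto. Qed.

Definition rep (C : Coset H) : G :=
  proj1_sig (constructive_indefinite_description _ (proj2_sig C)).

Lemma rep_rcoset (C : Coset H) : proj1_sig C = rcoset H (rep C).
Proof. unfold rep. destruct (constructive_indefinite_description _ _) as [g hg]. simpl. auto. Qed.

Lemma coset_of_rep (C : Coset H) : coset_of (rep C) = C.
Proof. apply coset_eq. simpl. rewrite rep_rcoset. reflexivity. Qed.

Lemma coset_of_mulH_rep h (C : Coset H) : H h -> coset_of (h ** rep C) = C.
Proof. intro hh. rewrite coset_of_mulH, coset_of_rep; auto. Qed.

Lemma coset_of_decomp (C : Coset H) x : coset_of x = C -> exists h, H h /\ x = h ** rep C.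
Proof. intros e%mem_coset_of. rewrite rep_rcoset in e. exact e. Qed.

Variable S : list G.

Lemma walk_project a b q : walk (cay_adj S) a b q ->
  walk (sch_adj H S) (coset_of a) (coset_of b) (map coset_of q).
Proof.
  revert a. induction q as [|x q IH]; intros a hw; simpl in *; [subst; auto|].
  destruct hw as [(s & hs & ->) hw]. split; [|apply IH; auto].
  exists s. split; auto. simpl. apply pred_ext. intro x. split.
  - intros (h & hh & ->). exists (h ** a). split; [exists h; auto|]. rewrite gmulA; auto.
  - intros (y & (h & hh & ->) & ->). exists h. split; auto. rewrite gmulA; auto.
Qed.

Lemma walk_lift C D p g : walk (sch_adj H S) C D p -> proj1_sig C g ->
  exists g' q, walk (cay_adj S) g g' q /\ length q = length p /\ proj1_sig D g'.
Proof.
  revert C g. induction p as [|C' p IH]; intros C g hw hg; simpl in hw.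
  - subst. exists g, []. simpl. auto.
  - destruct hw as [(s & hs & e) hw].
    assert (hg' : proj1_sig C' (g ** s)) by (rewrite e; exists g; auto).
    destruct (IH C' (g ** s) hw hg') as (g' & q & h1 & h2 & h3).
    exists g', ((g ** s) :: q). simpl. split; [split; auto; exists s; auto|]. auto.
Qed.

Lemma walk_translate a g g' q : walk (cay_adj S) g g' q ->
  walk (cay_adj S) (a ** g) (a ** g') (map (gmul a) q).
Proof.
  revert g. induction q as [|x q IH]; intros g hw; simpl in *; [subst; auto|].
  destruct hw as [(s & hs & ->) hw]. split; [exists s; split; auto; rewrite gmulA; auto|].
  apply IH; auto.
Qed.

Lemma walk_prefix a b q z : walk (cay_adj S) a b q -> In z (a :: q) ->
  exists w, Forall (fun s => In s S) w /\ length w <= length q /\ z = a ** gprod w.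
Proof.
  revert a. induction q as [|x q IH]; intros a hw hz.
  - destruct hz as [<-|[]]. exists []. simpl. repeat split; auto. rewrite gmul1r; auto.
  - destruct hz as [<-|hz].
    + exists []. simpl. repeat split; auto; [lia|]. rewrite gmul1r; auto.
    + destruct hw as [(s & hs & ->) hw]. destruct (IH _ hw hz) as (w & h1 & h2 & h3).
      exists (s :: w). repeat split; [constructor; auto|simpl; lia|]. rewrite h3. simpl.
      rewrite gmulA. reflexivity.
Qed.

End Cosets.

(** * Lifting a UFO from the Schreier graph to the Cayley graph *)

Section Lift.
Variable G : Group.
Local Notation "x ** y" := (@gmul G x y) (at level 40, left associativity).
Local Notation "x ^-1" := (@ginv G x) (at level 2).
Variable H : G -> Prop.
Hypothesis H_subgroup : subgroup H.
Variable S : list G.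
Local Notation coset_of := (coset_of G H).
Local Notation rep := (rep G H).

Variables (U F O : list (Coset H)) (mu : Coset H -> Coset H) (m k r : nat).
Hypothesis U_nodup : NoDup U.
Hypothesis O_nodup : NoDup O.
Hypothesis U_F_disjoint : disjoint_l U F.
Hypothesis U_O_disjoint : disjoint_l U O.
Hypothesis F_O_disjoint : disjoint_l F O.
Hypothesis U_nonempty : U <> [].
Hypothesis U_large : 2 * m * length F <= length U.
Hypothesis mu_bij : Permutation (map mu U) O.
Hypothesis paths_blocked : forall u o p, In u U -> In o O -> gpath (sch_adj H S) u o p ->
  (exists x, In x (u :: p) /\ In x F) \/ r <= length p.

Variable y : Coset H -> G.
Hypothesis y_spec : forall u, In u U ->
  (exists q, walk (cay_adj S) (rep u) (y u) q /\ length q <= k) /\ proj1_sig (mu u) (y u).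

(* The elements of H through which a Cayley path of length < r starting at rep u can enter
   a coset C ∈ F. *)
Definition crossing_set : list G :=
  filter (fun e => asbool (H e))
    (map (fun t => rep (fst (fst t)) ** gprod (snd t) ** (rep (snd (fst t)))^-1)
         (list_prod (list_prod U F) (words_below S r))).

Variable K : list G.
Hypothesis K_nonempty : K <> [].
Hypothesis K_nodup : NoDup K.
Hypothesis K_H : forall x, In x K -> H x.
Hypothesis K_doubling : card (product_set G K crossing_set) <= 2 * length K.

Definition lift_U : list G := map (fun p => fst p ** rep (snd p)) (list_prod K U).
Definition lift_F : list G :=
  nodup cdec (map (fun t => fst t ** rep (snd t)) (list_prod (product_set G K crossing_set) F)).
Definition lift_mu (x : G) : G := x ** ((rep (coset_of x))^-1 ** y (coset_of x)).
Definition lift_O : list G := map lift_mu lift_U.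

Lemma crossing_set_H e : In e crossing_set -> H e.
Proof. intros [_ he]%filter_In. apply asboolE, he. Qed.

Lemma coset_of_K_rep x u : In x K -> coset_of (x ** rep u) = u.
Proof. intro hx. apply (coset_of_mulH_rep G H H_subgroup); auto. Qed.

Lemma coset_of_K_y x u : In x K -> In u U -> coset_of (x ** y u) = mu u.
Proof. intros hx hu. rewrite (coset_of_mulH G H H_subgroup) by auto. apply (coset_of_mem G H H_subgroup), y_spec, hu. Qed.

Lemma lift_mu_K_rep x u : In x K -> lift_mu (x ** rep u) = x ** y u.
Proof.
  intro hx. unfold lift_mu. rewrite coset_of_K_rep by auto.
  rewrite <- !gmulA, (gmulA G (rep u)), gmulVr, gmul1l. reflexivity.
Qed.

Lemma in_lift_U x : In x lift_U -> exists kk u, In kk K /\ In u U /\ x = kk ** rep u.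
Proof. intros ([kk u] & <- & [hk hu]%in_prod_iff)%in_map_iff. eauto. Qed.

Lemma in_lift_O x : In x lift_O -> exists kk u, In kk K /\ In u U /\ x = kk ** y u.
Proof.
  intros (z & <- & (kk & u & hk & hu & ->)%in_lift_U)%in_map_iff.
  exists kk, u. rewrite lift_mu_K_rep; auto.
Qed.

Lemma coset_of_lift_U x : In x lift_U -> In (coset_of x) U.
Proof. intros (kk & u & hk & hu & ->)%in_lift_U. rewrite coset_of_K_rep; auto. Qed.

Lemma coset_of_lift_F x : In x lift_F -> In (coset_of x) F.
Proof.
  intros ([z C] & <- & [hz hC]%in_prod_iff)%nodup_In%in_map_iff.
  apply in_map_iff in hz as ([kk e] & <- & [hk he]%in_prod_iff).
  simpl. rewrite (coset_of_mulH_rep G H H_subgroup); auto. apply H_subgroup; auto. apply crossing_set_H, he.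
Qed.

Lemma coset_of_lift_O x : In x lift_O -> In (coset_of x) O.
Proof.
  intros (kk & u & hk & hu & ->)%in_lift_O. rewrite coset_of_K_y by auto.
  apply (Permutation_in _ mu_bij), in_map, hu.
Qed.

Lemma lift_U_nodup : NoDup lift_U.
Proof.
  apply NoDup_map_NoDup_ForallPairs; [|apply NoDup_list_prod; auto].
  intros [kk u] [kk' u'] [hk hu]%in_prod_iff [hk' hu']%in_prod_iff e. simpl in e.
  assert (u = u') as <- by (rewrite <- (coset_of_K_rep kk u), <- (coset_of_K_rep kk' u'), e; auto).
  apply gcancr in e. subst; auto.
Qed.

Lemma lift_O_nodup : NoDup lift_O.
Proof.
  assert (hmu : NoDup (map mu U)) by (apply (Permutation_NoDup (Permutation_sym mu_bij)), O_nodup).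
  apply NoDup_map_NoDup_ForallPairs; [|apply lift_U_nodup].
  intros a b (kk & u & hk & hu & ->)%in_lift_U (kk' & u' & hk' & hu' & ->)%in_lift_U e.
  rewrite !lift_mu_K_rep in e by auto.
  assert (u = u') as <-.
  { apply (NoDup_map_inj_in mu U u u' hmu hu hu').
    rewrite <- (coset_of_K_y kk u), <- (coset_of_K_y kk' u'), e; auto. }
  apply gcancr in e. subst; auto.
Qed.

(* |lift_F| <= |K E| |F| <= 2 |K| |F| <= |K| |U| / m = |lift_U| / m. *)
Lemma lift_U_large : m * length lift_F <= length lift_U.
Proof.
  assert (l1 : length lift_U = length K * length U)
    by (unfold lift_U; rewrite length_map, length_prod; auto).
  assert (l2 : length lift_F <= card (product_set G K crossing_set) * length F).
  { eapply Nat.le_trans; [apply card_map_le|apply card_prod_le]. }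
  rewrite l1. nia.
Qed.

Lemma lift_mu_close x : In x lift_U -> dist_le (cay_adj S) k x (lift_mu x).
Proof.
  intros (kk & u & hk & hu & ->)%in_lift_U. rewrite lift_mu_K_rep by auto.
  destruct (proj1 (y_spec u hu)) as (q & hq & hl).
  exists (map (gmul kk) q). split; [apply walk_translate, hq|rewrite length_map; auto].
Qed.

(* z = kk rep u w and z ∈ C = H rep C force z = (kk e) rep C with e = rep u w (rep C)⁻¹ ∈ crossing_set. *)
Lemma crossing_in_lift_F kk u w z :
  In kk K -> In u U -> Forall (fun s => In s S) w -> length w < r ->
  z = kk ** rep u ** gprod w -> In (coset_of z) F -> In z lift_F.
Proof.
  intros hk hu hw hwl hz hC.
  destruct (coset_of_decomp G H H_subgroup (coset_of z) z eq_refl) as (h & hh & hzh).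
  set (e := rep u ** gprod w ** (rep (coset_of z))^-1).
  assert (hke : kk ** e = h).
  { unfold e. rewrite !gmulA, <- hz, hzh at 1. apply gmulK. }
  assert (heH : H e).
  { replace e with (kk^-1 ** h); [apply H_subgroup; auto; apply H_subgroup, K_H, hk|].
    rewrite <- hke, gmulA, gmulVl, gmul1l. reflexivity. }
  apply nodup_In, in_map_iff. exists (kk ** e, coset_of z). split; [simpl; rewrite hke; auto|].
  apply in_prod; auto. apply in_map_iff. exists (kk, e). split; auto. apply in_prod; auto.
  apply filter_In. split; [|apply asboolE, heH]. apply in_map_iff.
  exists ((u, coset_of z), w). split; [reflexivity|].
  apply in_prod; [apply in_prod; auto|apply words_below_in; auto].
Qed.

(* A short Cayley path projects to a short Schreier walk; loop erasure gives a Schreier path,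
   which must meet F, at the coset of some vertex of the Cayley path. *)
Lemma short_path_meets_lift_F x o p : In x lift_U -> In o lift_O ->
  gpath (cay_adj S) x o p -> length p < r -> exists z, In z (x :: p) /\ In z lift_F.
Proof.
  intros (kk & u & hk & hu & ->)%in_lift_U ho [hw _] hr.
  pose proof (coset_of_lift_O o ho) as hO.
  destruct (walk_to_path _ _ _ _ _ (walk_project G H S _ _ _ hw)) as (P & hP & hPl & hPi).
  rewrite length_map in hPl. rewrite coset_of_K_rep in hP, hPi by auto.
  destruct (paths_blocked u (coset_of o) P hu hO hP) as [(C & hC & hCF)|]; [|lia].
  apply hPi in hC.
  assert (hz : exists z, In z (kk ** rep u :: p) /\ coset_of z = C).
  { destruct hC as [<-|(z & hz1 & hz2)%in_map_iff]; [|exists z; split; [right|]; auto].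
    exists (kk ** rep u). split; [now left|apply coset_of_K_rep, hk]. }
  destruct hz as (z & hz & <-).
  destruct (walk_prefix G S _ _ _ z hw hz) as (w & hwS & hwl & hzw).
  exists z. split; auto. apply (crossing_in_lift_F kk u w); auto; lia.
Qed.

Theorem lifted_UFO : UFO (cay_adj S) m k r.
Proof.
  exists lift_U, lift_F, lift_O, lift_mu.
  repeat split.
  - apply lift_U_nodup.
  - apply NoDup_nodup.
  - apply lift_O_nodup.
  - intros x hU%coset_of_lift_U hF%coset_of_lift_F. exact (U_F_disjoint _ hU hF).
  - intros x hU%coset_of_lift_U hO%coset_of_lift_O. exact (U_O_disjoint _ hU hO).
  - intros x hF%coset_of_lift_F hO%coset_of_lift_O. exact (F_O_disjoint _ hF hO).
  - destruct K as [|k0 K0] eqn:eK; [congruence|]. destruct U as [|u0 U0] eqn:eU; [congruence|].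
    assert (hx : In (k0 ** rep u0) lift_U).
    { apply in_map_iff. exists (k0, u0). split; auto. rewrite eK, eU. apply in_prod; now left. }
    intro e. rewrite e in hx. destruct hx.
  - apply lift_U_large.
  - apply Permutation_refl.
  - apply lift_mu_close.
  - intros x o p hx ho hp. destruct (le_lt_dec r (length p)) as [|hr]; [now right|left].
    apply (short_path_meets_lift_F x o); auto.
Qed.

End Lift.

Theorem mainTheorem7 (G : Group) (H : G -> Prop) :
  subgroup H ->
  amenable_subgroup H ->
  (exists S : list G, fin_sym_gen S /\ extraterrestrial (sch_adj H S)) ->
  group_extraterrestrial G.
Proof.
  intros hsub hamen (S & hgen & hext).
  exists S. split; [exact hgen|]. intro m.
  destruct (hext (2 * m)) as [k hk]. exists k. intro r.
  destruct (hk r) as (U & F & O & mu & hU & _ & hO & hUF & hUO & hFO & hUne & hcard & hperm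
                      & hdist & hpath).
  assert (hy : forall u, In u U -> exists g, (exists q, walk (cay_adj S) (rep G H u) g q /\
                                             length q <= k) /\ proj1_sig (mu u) g).
  { intros u hu. destruct (hdist u hu) as (p & hw & hl).
    destruct (walk_lift G H S u (mu u) p (rep G H u) hw) as (g & q & hq & hql & hg).
    - apply (mem_coset_of G H hsub), coset_of_rep.
    - exists g. split; [exists q; split; [|lia]|]; auto. }
  destruct (choice_on (@gone G) U _ hy) as [y hy'].
  destruct (amenable_small_doubling G H hsub (crossing_set G H S U F r) S hamen (proj2 hgen)
              (crossing_set_H G H S U F r)) as (K & hK & hKnd & hKH & hKE).
  exact (lifted_UFO G H hsub S U F O mu m k r hU hO hUF hUO hFO hUne hcard hperm hpath y hy'
           K hK hKnd hKH hKE).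
Qed.
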